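(* Let $\mathbf p=(p_1,\dots,p_n)$ be positive integers with $p_1\ge\cdots\ge p_n$, let $c\in[0,1]$, let $g=\gcd(p_1,\dots,p_n)$, and let $P=(p_1+\cdots+p_n)/g$. For each pair $i<j$, let $T_{ij}$ be the finite word consisting of the first $(p_i+p_j)/g$ terms of the two-party sequence $S_c((p_i,p_j))$, with party labels $1,2$ replaced by $i,j$ respectively. Run the following lifting procedure for $P$ steps. At each step, find a label $k\in\{1,\dots,n\}$ that is the first remaining entry of all $n-1$ words $T_{ij}$ with $k\in\{i,j\}$. Append $k$ to an output word $w$, and delete the first entry of each of those $n-1$ words. Then: (i) at every step such a label $k$ exists and is unique; (ii) after $P$ steps all the words $T_{ij}$ are empty; (iii) the output word $w=(w_1,\dots,w_P)$ equals the first $P$ terms of $S_c(\mathbf p)$.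
   Context: Stationary divisor method with cut point $c\in[0,1]$ for a vote vector $\mathbf q=(q_1,\dots,q_m)$ with $q_1\ge\cdots\ge q_m$: seats are allocated one at a time. Initially each party $i$ has $a_i=0$ seats; each next seat goes to a party $i$ maximizing $q_i/(a_i+c)$, whose $a_i$ then increases by $1$. Ties are broken in favor of the smallest index. For $c=0$ the convention is that $q_i/0>q_j/0$ whenever $q_i>q_j$, and $q_i/0>q_j/k$ for every $k>0$. $S_c(\mathbf q)$ is the infinite sequence of indices of parties receiving successive seats. *)

From HB Require Import structures.
From mathcomp Require Import all_boot all_order all_algebra.
From mathcomp Require Import reals.
Set Implicit Arguments. Unset Strict Implicit. Unset Printing Implicit Defensive.
Import Order.TTheory GRing.Theory Num.Theory.

(* Parties are indexed 0 .. m-1 (paper: 1 .. m). *)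

Section Divisor.
Variable R : realType.
Local Open Scope ring_scope.

(* gt_prio c qi ai qj aj : the priority q_i/(a_i+c) is strictly larger than
   q_j/(a_j+c), with the paper's convention for zero denominators (c = 0):
   q_i/0 > q_j/0 iff q_i > q_j, and q_i/0 > q_j/k for k > 0. *)
Definition gt_prio (c : R) (qi ai qj aj : nat) : bool :=
  let di := ai%:R + c in
  let dj := aj%:R + c in
  if di == 0 then (if dj == 0 then (qj < qi)%N else true)
  else if dj == 0 then false
  else qj%:R / dj < qi%:R / di.

Definition next_seat (c : R) (q a : seq nat) : nat :=
  let m := size q in
  find (fun i => all (fun j => ~~ gt_prio c (nth 0%N q j) (nth 0%N a j)
                                             (nth 0%N q i) (nth 0%N a i))
                     (iota 0 m))
       (iota 0 m).

Fixpoint alloc (c : R) (q : seq nat) (k : nat) : seq nat :=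
  match k with
  | 0 => nseq (size q) 0%N
  | k'.+1 => let a := alloc c q k' in incr_nth a (next_seat c q a)
  end.

(* S_c(q) : the k-th term (0-based) is the party receiving seat number k+1 *)
Definition S (c : R) (q : seq nat) (k : nat) : nat := next_seat c q (alloc c q k).

Definition Tword (c : R) (p : seq nat) (g i j : nat) : seq nat :=
  let pi := nth 0%N p i in
  let pj := nth 0%N p j in
  mkseq (fun t => if S c [:: pi; pj] t == 0%N then i else j) ((pi + pj) %/ g).
End Divisor.

(* Lifting procedure.  A state is a family of words (only pairs i < j < n
   matter) together with the output word. *)
Definition words := nat -> nat -> seq nat.

Definition valid_label (n : nat) (T : words) (k : nat) : bool :=
  all (fun i => all (fun j =>
        (i < j) ==> ((k == i) || (k == j)) ==> (ohead (T i j) == Some k))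
      (iota 0 n)) (iota 0 n).

(* one step: pick a valid label (the first one; statement (i) below asserts
   it is unique), append it and delete the first entry of the relevant words *)
Definition lift_step (n : nat) (st : words * seq nat) : words * seq nat :=
  let T := st.1 in
  let k := find (valid_label n T) (iota 0 n) in
  ((fun i j => if (k == i) || (k == j) then behead (T i j) else T i j),
   rcons st.2 k).

Definition lift_state (n : nat) (T0 : words) (t : nat) : words * seq nat :=
  iter t (lift_step n) (T0, [::]).

From HB Require Import structures.
From mathcomp Require Import all_boot all_order all_algebra.
From mathcomp Require Import reals.
From mathcomp Require Import lra zify.
Set Implicit Arguments. Unset Strict Implicit. Unset Printing Implicit Defensive.
Import Order.TTheory GRing.Theory Num.Theory.

(* A divisor method ranks the potential seats (x, b), the (b+1)-th seat of
   party x, by the priority q_x/(b+c) with ties broken by index, and after t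
   steps it has awarded exactly the t first seats of this ranking.  Dropping
   all parties except i and j does not change the relative ranking of their
   seats, so the subsequence of S_c(p) made of the labels i and j is
   S_c((p_i, p_j)) relabelled.  After P steps every party x holds exactly
   p_x/g seats (this uses c <= 1), so T_ij is the {i, j}-subsequence of the
   first P terms of S_c(p).  Finally, a word is recovered from its two-letter
   subsequences by the lifting procedure: its next letter is the only label
   heading every subsequence in which it occurs.
*)

Lemma leq_sumn_nth (a a' : seq nat) : size a = size a' ->
  (forall x, nth 0 a x <= nth 0 a' x) -> sumn a <= sumn a'.
Proof.
elim: a a' => [|v a IH] [|v' a'] //= [size_aa'] le_aa'.
exact: leq_add (le_aa' 0) (IH a' size_aa' (fun x => le_aa' x.+1)).
Qed.

Lemma eq_from_sumn_leq (a a' : seq nat) : size a = size a' ->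
  (forall x, nth 0 a x <= nth 0 a' x) -> sumn a' <= sumn a -> a = a'.
Proof.
elim: a a' => [|v a IH] [|v' a'] //= [size_aa'] le_aa' le_sum.
have le_v := le_aa' 0; have le_tail x := le_aa' x.+1.
have le_sum_tail := leq_sumn_nth size_aa' le_tail.
by rewrite /= in le_v; rewrite (IH a') //; [congr cons|]; lia.
Qed.

Lemma sumn_incr_nth (a : seq nat) k : sumn (incr_nth a k) = (sumn a).+1.
Proof.
elim: a k => [|v a IH] [|k] //=; last by rewrite IH addnS.
by rewrite sumn_ncons /=; lia.
Qed.

Lemma foldr_gcdn_dvd (s : seq nat) : all (dvdn (foldr gcdn 0 s)) s.
Proof.
elim: s => [//|v s IH] /=; rewrite dvdn_gcdl /=.
by apply/allP => x xs; apply: dvdn_trans (dvdn_gcdr _ _) (allP IH x xs).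
Qed.

Lemma sumn_divn d (s : seq nat) : all (dvdn d) s ->
  sumn [seq v %/ d | v <- s] = sumn s %/ d.
Proof.
elim: s => [|v s IH] /=; first by rewrite div0n.
by case/andP => d_v d_s; rewrite IH // divnDl.
Qed.

Section SeatOrder.
Variables (R : realType) (c : R) (B : nat).
Local Open Scope ring_scope.
Hypothesis c_ge0 : 0 <= c.

(* q/0, met only when c = 0 and a = 0, is encoded as B + 1 + q: above every
   finite priority of a party with at most B votes, and increasing in q as the
   convention on q/0 requires. *)
Definition prio (q a : nat) : R :=
  if a%:R + c == 0 then (B + 1 + q)%:R else q%:R / (a%:R + c).

Lemma seat_denom_eq0 (a : nat) : (a%:R + c == 0) = (a == 0)%N && (c == 0).
Proof.
apply/idP/andP => [/eqP denom0 | [/eqP-> /eqP->]]; last by rewrite addr0.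
have a_ge0 := ler0n R a.
have c0 : c = 0 by move: c_ge0; lra.
have a0 : a%:R = 0 :> R by lra.
by move/eqP: a0; rewrite pnatr_eq0 c0 eqxx.
Qed.

Lemma seat_denom_gt0 (a : nat) : ~~ ((a == 0)%N && (c == 0)) -> 0 < a%:R + c.
Proof.
rewrite -seat_denom_eq0 => denom_neq0.
by rewrite lt_def denom_neq0 addr_ge0 ?ler0n.
Qed.

Lemma gt_prioE (qi ai qj aj : nat) : (qi <= B)%N -> (qj <= B)%N ->
  gt_prio c qi ai qj aj = (prio qj aj < prio qi ai).
Proof.
move=> qi_le qj_le; rewrite /gt_prio /prio !seat_denom_eq0.
case Ei: ((ai == 0)%N && (c == 0)); case Ej: ((aj == 0)%N && (c == 0)).
- by rewrite ltr_nat ltn_add2l.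
- have /andP[_ /eqP c0] := Ei.
  rewrite ltr_pdivrMr ?seat_denom_gt0 ?Ej //.
  move/negbT: Ej; rewrite c0 eqxx andbT addr0 -natrM ltr_nat => aj_neq0.
  by symmetry; apply/idP; nia.
- have /andP[_ /eqP c0] := Ej.
  rewrite ltr_pdivlMr ?seat_denom_gt0 ?Ei //.
  move/negbT: Ei; rewrite c0 eqxx andbT addr0 -natrM ltr_nat => ai_neq0.
  by symmetry; apply/idP; nia.
- by [].
Qed.

Lemma prio_decr (q b b' : nat) : (0 < q <= B)%N -> (b < b')%N ->
  prio q b' < prio q b.
Proof.
case/andP=> q_gt0 q_le lt_bb'; rewrite /prio !seat_denom_eq0.
have /negbTE-> /= : ~~ ((b' == 0)%N && (c == 0)) by case: b' lt_bb'.
have q_pos : 0 < q%:R :> R by rewrite ltr0n.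
have b'_pos : 0 < b'%:R + c by rewrite seat_denom_gt0 //; case: b' lt_bb'.
have lt_bb'R : b%:R < b'%:R :> R by rewrite ltr_nat.
case Eb: ((b == 0)%N && (c == 0)).
  have /andP[/eqP b0 /eqP c0] := Eb; subst.
  by rewrite ltr_pdivrMr // addr0 -natrM ltr_nat; nia.
have b_pos : 0 < b%:R + c by rewrite seat_denom_gt0 ?Eb.
rewrite ltr_pdivrMr // mulrAC ltr_pdivlMr //.
have := ler0n R b; move: c_ge0; nra.
Qed.

(* (b + 1)(v + c) - v(b + c) = v(1 - c) + c(b + 1) > 0 needs c <= 1. *)
Lemma prio_quota_lt (g u v b : nat) : c <= 1 -> (0 < g)%N -> (0 < v)%N ->
  (b < u)%N -> (v * g <= B)%N -> prio (v * g) v < prio (u * g) b.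
Proof.
move=> c_le1 g_gt0 v_gt0 lt_bu vg_le; rewrite /prio !seat_denom_eq0.
have /negbTE-> /= : ~~ ((v == 0)%N && (c == 0)) by case: v v_gt0 {vg_le}.
have v_pos : 0 < v%:R + c by rewrite seat_denom_gt0 //; case: v v_gt0 {vg_le}.
have v_ge1 : 1 <= v%:R :> R by rewrite ler1n.
have g_ge1 : 1 <= g%:R :> R by rewrite ler1n.
have u_ge : b%:R + 1 <= u%:R :> R by rewrite natr1 ler_nat.
have b_ge0 := ler0n R b.
case Eb: ((b == 0)%N && (c == 0)).
  have /andP[/eqP b0 /eqP c0] := Eb; subst.
  by rewrite ltr_pdivrMr // addr0 -natrM ltr_nat; nia.
have b_pos : 0 < b%:R + c by rewrite seat_denom_gt0 ?Eb.
rewrite ltr_pdivrMr // mulrAC ltr_pdivlMr // !natrM.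
have : v%:R * (b%:R + c) < u%:R * (v%:R + c) by move: c_ge0; nra.
nra.
Qed.

Local Close Scope ring_scope.

Definition seat_lt (q : seq nat) (x b y b' : nat) : bool :=
  (prio (nth 0 q y) b' < prio (nth 0 q x) b)%R ||
  (prio (nth 0 q x) b == prio (nth 0 q y) b') && (x < y).

Lemma seat_lt_asym q x b y b' : seat_lt q x b y b' -> ~~ seat_lt q y b' x b.
Proof.
rewrite /seat_lt => /orP[lt_xy | /andP[/eqP eq_xy lt_xy]].
  by rewrite negb_or -leNgt ltW //= (lt_eqF lt_xy).
by rewrite eq_xy ltxx eqxx /= -leqNgt ltnW.
Qed.

Lemma seat_lt_trans q x b y b' z b'' :
  seat_lt q x b y b' -> seat_lt q y b' z b'' -> seat_lt q x b z b''.
Proof.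
rewrite /seat_lt => /orP[lt1 | /andP[/eqP eq1 lt1]] /orP[lt2 | /andP[/eqP eq2 lt2]].
- by rewrite (lt_trans lt2 lt1).
- by rewrite -eq2 lt1.
- by rewrite eq1 lt2.
- by rewrite eq1 eq2 eqxx (ltn_trans lt1 lt2) orbT.
Qed.

(* [a] consists of the [sumn a] first seats in the order [seat_lt]. *)
Definition seat_prefix (q a : seq nat) : Prop :=
  forall x y b, x < size q -> y < size q -> b < nth 0 a x ->
    seat_lt q x b y (nth 0 a y).

Lemma seat_prefix_cross q a a' x y :
  seat_prefix q a -> seat_prefix q a' -> x < size q -> y < size q ->
  nth 0 a x < nth 0 a' x -> nth 0 a y <= nth 0 a' y.
Proof.
move=> pre_a pre_a' xq yq lt_x; rewrite leqNgt; apply/negP => lt_y.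
by have := seat_lt_asym (pre_a' x y _ xq yq lt_x); rewrite pre_a.
Qed.

Lemma seat_prefix_unique q a a' : size a = size q -> size a' = size q ->
  seat_prefix q a -> seat_prefix q a' -> sumn a = sumn a' -> a = a'.
Proof.
move=> size_a size_a' pre_a pre_a' sum_aa'.
have nth_out y : size q <= y -> nth 0 a y = nth 0 a' y.
  by move=> qy; rewrite !nth_default ?size_a ?size_a'.
have [le_aa' | /allPn[x]] :=
  boolP (all (fun x => nth 0 a x <= nth 0 a' x) (iota 0 (size q))).
  apply: eq_from_sumn_leq; rewrite ?size_a ?size_a' ?sum_aa' // => y.
  have [yq | /nth_out-> //] := ltnP y (size q).
  by apply: (allP le_aa'); rewrite mem_iota.
rewrite mem_iota -ltnNge => /andP[_ xq] lt_x.
symmetry; apply: eq_from_sumn_leq; rewrite ?size_a ?size_a' ?sum_aa' // => y.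
have [yq | /nth_out-> //] := ltnP y (size q).
exact: (seat_prefix_cross pre_a' pre_a xq yq lt_x).
Qed.

Section Allocation.
Variable q : seq nat.
Hypotheses (q_bounded : all (fun v => 0 < v <= B) q) (q_nonempty : 0 < size q).

Lemma nth_votes_le x : nth 0 q x <= B.
Proof.
have [xq | qx] := ltnP x (size q); last by rewrite nth_default.
by case/andP: (all_nthP 0 q_bounded x xq).
Qed.

Lemma nth_votes_gt0 x : x < size q -> 0 < nth 0 q x.
Proof. by move=> xq; case/andP: (all_nthP 0 q_bounded x xq). Qed.

Lemma seat_lt_succ x b b' : x < size q -> b < b' -> seat_lt q x b x b'.
Proof.
by move=> xq lt_bb'; rewrite /seat_lt prio_decr // nth_votes_gt0 ?nth_votes_le.
Qed.

Lemma seat_lt_leq x b y b' b'' : y < size q -> b' <= b'' ->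
  seat_lt q x b y b' -> seat_lt q x b y b''.
Proof.
move=> yq; rewrite leq_eqVlt => /orP[/eqP<- // | lt_b'] lt_x.
exact: seat_lt_trans lt_x (seat_lt_succ yq lt_b').
Qed.

Lemma next_seat_spec a : let k := next_seat c q a in
  k < size q /\
  forall y, y < size q -> y != k -> seat_lt q k (nth 0 a k) y (nth 0 a y).
Proof.
pose F i := prio (nth 0 q i) (nth 0 a i).
pose maximal i := all (fun j => ~~ gt_prio c (nth 0 q j) (nth 0 a j)
                                             (nth 0 q i) (nth 0 a i))
                      (iota 0 (size q)).
have maximalP i : reflect (forall j, j < size q -> (F j <= F i)%R) (maximal i).
  apply: (iffP allP) => [max_i j jq | max_i j].
    by have := max_i j; rewrite mem_iota jq gt_prioE ?nth_votes_le // -leNgt; apply.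
  by rewrite mem_iota gt_prioE ?nth_votes_le // -leNgt => /andP[_ /max_i].
have not_maximal i : ~~ maximal i -> exists2 j, j < size q & (F i < F j)%R.
  case/allPn => j; rewrite mem_iota negbK gt_prioE ?nth_votes_le //.
  by case/andP => _ jq lt_ij; exists j.
have has_maximal : has maximal (iota 0 (size q)).
  have [i _ max_i] := @arg_maxP _ _ 'I_(size q) (Ordinal q_nonempty) xpredT
                        (fun i => F i) isT.
  apply/hasP; exists (val i); first by rewrite mem_iota /=.
  by apply/maximalP => j jq; exact: (max_i (Ordinal jq)).
change (next_seat c q a) with (find maximal (iota 0 (size q))).
set k := find _ _.
have k_lt : k < size q by rewrite -[X in _ < X](size_iota 0) -has_find.
have /maximalP max_k : maximal k by have := nth_find 0 has_maximal; rewrite nth_iota.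
split => // y yq y_neq_k; rewrite /seat_lt -/(F y) -/(F k).
have [lt_yk | lt_ky] := ltnP y k.
  have := before_find 0 lt_yk; rewrite nth_iota ?(ltn_trans lt_yk) //.
  case/negbT/not_maximal => j jq lt_yj.
  by rewrite (lt_le_trans lt_yj (max_k j jq)).
have := max_k y yq; rewrite le_eqVlt => /orP[/eqP-> | -> //].
by rewrite ltxx eqxx ltn_neqAle eq_sym y_neq_k lt_ky.
Qed.

Lemma alloc_spec t :
  [/\ size (alloc c q t) = size q, sumn (alloc c q t) = t &
      seat_prefix q (alloc c q t)].
Proof.
elim: t => [|t [size_a sum_a pre_a]] /=.
  split; [by rewrite size_nseq | by elim: (size q) | move=> x y b _ _].
  by rewrite nth_nseq if_same.
have [k_lt k_first] := next_seat_spec (alloc c q t).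
set a := alloc c q t in size_a sum_a pre_a k_lt k_first *.
set k := next_seat c q a in k_lt k_first *.
split; [by rewrite size_incr_nth size_a k_lt | by rewrite sumn_incr_nth sum_a |].
move=> x y b xq yq; rewrite nth_incr_nth => lt_b.
have le_y : nth 0 a y <= nth 0 (incr_nth a k) y by rewrite nth_incr_nth leq_addl.
have [lt_b_ax | le_ax_b] := ltnP b (nth 0 a x).
  exact: seat_lt_leq yq le_y (pre_a x y b xq yq lt_b_ax).
have [-> ->] : x = k /\ b = nth 0 a x.
  by case: eqP lt_b => [-> | _] /= lt_b; [split => //; lia | lia].
have [-> | y_neq_k] := eqVneq y k.
  by rewrite nth_incr_nth eqxx seat_lt_succ.
by rewrite nth_incr_nth eq_sym (negbTE y_neq_k) k_first.
Qed.

Lemma alloc_seat_prefix a : size a = size q -> seat_prefix q a ->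
  alloc c q (sumn a) = a.
Proof.
have [size_alloc sum_alloc pre_alloc] := alloc_spec (sumn a).
by move=> size_a pre_a; apply: (seat_prefix_unique size_alloc size_a pre_alloc pre_a).
Qed.

End Allocation.

Definition restrict (a s : seq nat) : seq nat := [seq nth 0 a i | i <- s].

Section Restriction.
Variables q s : seq nat.
Hypotheses (q_bounded : all (fun v => 0 < v <= B) q) (q_nonempty : 0 < size q).
Hypotheses (s_sorted : sorted ltn s) (s_parties : all (fun i => i < size q) s).

Let s_uniq : uniq s := sorted_uniq ltn_trans ltnn s_sorted.

Lemma nth_restrict a x : x < size s -> nth 0 (restrict a s) x = nth 0 a (nth 0 s x).
Proof. exact: nth_map. Qed.

Lemma restrict_bounded : all (fun v => 0 < v <= B) (restrict q s).
Proof. by rewrite all_map; apply/allP => i /(allP s_parties) /(all_nthP 0 q_bounded). Qed.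

Lemma seat_lt_restrict x b y b' : x < size s -> y < size s ->
  seat_lt (restrict q s) x b y b' = seat_lt q (nth 0 s x) b (nth 0 s y) b'.
Proof.
move=> xs ys; rewrite /seat_lt !nth_restrict //.
by rewrite -(lt_sorted_ltn_nth 0 s_sorted xs ys).
Qed.

Lemma alloc_restrict a : size a = size q -> seat_prefix q a ->
  alloc c (restrict q s) (sumn (restrict a s)) = restrict a s.
Proof.
move=> size_a pre_a; have [/size0nil-> // | s_nonempty] := posnP (size s).
apply: (alloc_seat_prefix restrict_bounded); rewrite ?size_map //.
move=> x y b; rewrite size_map => xs ys; rewrite !nth_restrict // seat_lt_restrict //.
by apply: pre_a; apply: (all_nthP 0 s_parties).
Qed.

Lemma restrict_incr_nth a k : restrict (incr_nth a k) s =
  if k \in s then incr_nth (restrict a s) (index k s) else restrict a s.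
Proof.
case: ifP => ks; last first.
  by apply/eq_in_map => i i_s; rewrite nth_incr_nth; case: eqP ks => // ->; rewrite i_s.
apply: (@eq_from_nth _ 0); first by rewrite size_incr_nth !size_map index_mem ks.
move=> x; rewrite size_map => xs; rewrite nth_incr_nth !nth_restrict // nth_incr_nth.
by congr (_ + _); congr nat_of_bool; apply/eqP/eqP => [-> | <-];
  rewrite ?index_uniq ?nth_index.
Qed.

Lemma next_seat_restrict a : next_seat c q a \in s ->
  next_seat c (restrict q s) (restrict a s) = index (next_seat c q a) s.
Proof.
set k := next_seat c q a => ks.
have k_idx : index k s < size s by rewrite index_mem.
have [_ k_first] := next_seat_spec q_bounded q_nonempty a.
have s_nonempty : 0 < size (restrict q s) by rewrite size_map (leq_ltn_trans _ k_idx).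
have [k'_lt k'_first] := next_seat_spec restrict_bounded s_nonempty (restrict a s).
set k' := next_seat _ _ _ in k'_lt k'_first *; rewrite size_map in k'_lt k'_first.
apply/eqP; apply: contraT; rewrite eq_sym => k_neq.
have := k'_first _ k_idx k_neq.
rewrite !nth_restrict // seat_lt_restrict // nth_index //.
have k'_neq_k : nth 0 s k' != k.
  by apply: contra k_neq => /eqP<-; rewrite index_uniq.
by move/seat_lt_asym; rewrite k_first // (all_nthP 0 s_parties).
Qed.

Lemma filter_S_restrict t :
  [seq x <- mkseq (S c q) t | x \in s] =
  map (nth 0 s) (mkseq (S c (restrict q s)) (sumn (restrict (alloc c q t) s))).
Proof.
elim: t => [|t IH].
  by rewrite /= sumnE big_map big1 // => i _; rewrite nth_nseq if_same.
have [size_a _ pre_a] := alloc_spec q_bounded q_nonempty t.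
rewrite mkseqS filter_rcons /= restrict_incr_nth /S.
case: ifP => ks; last by rewrite IH.
rewrite sumn_incr_nth mkseqS map_rcons IH; congr rcons.
by rewrite alloc_restrict // next_seat_restrict // nth_index.
Qed.

End Restriction.

Lemma filter_S_pair q i j t : all (fun v => 0 < v <= B) q -> i < j < size q ->
  [seq x <- mkseq (S c q) t | (x == i) || (x == j)] =
  mkseq (fun u => if S c [:: nth 0 q i; nth 0 q j] u == 0 then i else j)
        (nth 0 (alloc c q t) i + nth 0 (alloc c q t) j).
Proof.
move=> q_bounded /andP[lt_ij lt_jq]; have lt_iq := ltn_trans lt_ij lt_jq.
have q_nonempty : 0 < size q by apply: leq_ltn_trans lt_iq.
have pair_bounded : all (fun v => 0 < v <= B) [:: nth 0 q i; nth 0 q j].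
  by rewrite /= !(all_nthP 0 q_bounded).
rewrite (eq_filter (a2 := fun x => x \in [:: i; j])) => [|x]; last by rewrite mem_seq2.
rewrite filter_S_restrict //= ?lt_ij ?lt_iq ?lt_jq // addn0 /mkseq -map_comp.
apply: eq_map => u /=.
have [] := next_seat_spec pair_bounded isT (alloc c [:: nth 0 q i; nth 0 q j] u).
by rewrite /S; case: (next_seat _ _ _) => [|[|]].
Qed.

Lemma alloc_exact_quota q g : (c <= 1)%R -> 0 < g -> all (dvdn g) q ->
  all (fun v => 0 < v <= B) q -> 0 < size q ->
  alloc c q (sumn q %/ g) = [seq v %/ g | v <- q].
Proof.
move=> c_le1 g_gt0 g_dvd q_bounded q_nonempty.
rewrite -sumn_divn //; apply: alloc_seat_prefix; rewrite ?size_map //.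
move=> x y b xq yq; rewrite !(nth_map 0) // => lt_b; apply/orP; left.
have qy_gt0 := nth_votes_gt0 q_bounded yq.
have g_dvd_q z : z < size q -> g %| nth 0 q z by move=> zq; apply: (all_nthP 0 g_dvd).
have := @prio_quota_lt g (nth 0 q x %/ g) (nth 0 q y %/ g) b c_le1 g_gt0.
rewrite !divnK ?g_dvd_q // divn_gt0 // dvdn_leq ?g_dvd_q //.
by apply; rewrite ?nth_votes_le.
Qed.

End SeatOrder.

Definition pair_projections (n : nat) (T : words) (u : seq nat) : Prop :=
  forall i j, i < j < n -> T i j = [seq x <- u | (x == i) || (x == j)].

Lemma find_iota_pred1 (a : pred nat) n k : k < n ->
  (forall y, y < n -> a y = (y == k)) -> find a (iota 0 n) = k.
Proof.
move=> lt_kn aE; rewrite (eq_in_find (a2 := pred1 k)) => [|y]; last first.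
  by rewrite mem_iota => /andP[_ /aE].
have := index_uniq 0 (_ : k < size (iota 0 n)) (iota_uniq 0 n).
by rewrite size_iota nth_iota // => /(_ lt_kn).
Qed.

Section Lifting.
Variables (n : nat) (w : seq nat).
Hypothesis w_lt : all (fun k => k < n) w.

Lemma valid_label_head T i j k : valid_label n T k -> i < j < n ->
  (k == i) || (k == j) -> ohead (T i j) = Some k.
Proof.
move=> valid_k /andP[lt_ij lt_jn] k_ij; have lt_in := ltn_trans lt_ij lt_jn.
move/allP/(_ i): valid_k; rewrite mem_iota lt_in => /(_ isT) /allP/(_ j).
by rewrite mem_iota lt_jn lt_ij k_ij => /(_ isT) /eqP.
Qed.

(* The next letter of w heads every projection containing it, while a label k
   other than it is not the head of the projection onto {k, w_t}. *)
Lemma valid_labelE T t : t < size w -> pair_projections n T (drop t w) ->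
  forall k, k < n -> valid_label n T k = (k == nth 0 w t).
Proof.
move=> lt_tw T_proj k lt_kn; set l := nth 0 w t.
have lt_ln : l < n by apply: (all_nthP 0 w_lt).
have head_l i j : i < j < n -> (l == i) || (l == j) -> ohead (T i j) = Some l.
  by move=> lt_ijn l_ij; rewrite T_proj // (drop_nth 0 lt_tw) /= l_ij.
apply/idP/eqP => [valid_k | ->]; last first.
  apply/allP => i; rewrite mem_iota => /andP[_ lt_in].
  apply/allP => j; rewrite mem_iota => /andP[_ lt_jn].
  by apply/implyP => lt_ij; apply/implyP => /head_l ->; rewrite ?lt_ij.
case: (ltngtP k l) => [lt_kl | lt_lk | //].
- have lt_kln : k < l < n by rewrite lt_kl lt_ln.
  have := valid_label_head valid_k lt_kln; rewrite head_l ?eqxx ?orbT //.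
  by move=> /(_ isT) [->].
- have lt_lkn : l < k < n by rewrite lt_lk lt_kn.
  have := valid_label_head valid_k lt_lkn; rewrite head_l ?eqxx ?orbT //.
  by move=> /(_ isT) [->].
Qed.

Lemma lift_state_spec T0 t : pair_projections n T0 w -> t <= size w ->
  pair_projections n (lift_state n T0 t).1 (drop t w) /\
  (lift_state n T0 t).2 = take t w.
Proof.
move=> T0_proj; elim: t => [_ | t IH lt_tw]; first by rewrite drop0 take0.
have [T_proj out] := IH (ltnW lt_tw).
have lt_wn : nth 0 w t < n by apply: (all_nthP 0 w_lt).
rewrite /lift_state iterS -/(lift_state n T0 t) /lift_step.
rewrite (find_iota_pred1 lt_wn (valid_labelE lt_tw T_proj)) /=.
split; last by rewrite out (take_nth 0).
move=> i j lt_ijn; rewrite T_proj // (drop_nth 0 lt_tw) /=.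
by case: (_ || _).
Qed.

Lemma lifting_recovers_word T0 : pair_projections n T0 w ->
  (forall t, t < size w ->
     exists k, k < n /\ valid_label n (lift_state n T0 t).1 k /\
       (forall k', k' < n -> valid_label n (lift_state n T0 t).1 k' -> k' = k)) /\
  (forall i j, i < j < n -> (lift_state n T0 (size w)).1 i j = [::]) /\
  (lift_state n T0 (size w)).2 = w.
Proof.
move=> T0_proj; split.
  move=> t lt_tw; have [T_proj _] := lift_state_spec T0_proj (ltnW lt_tw).
  have valid_t := valid_labelE lt_tw T_proj.
  exists (nth 0 w t); split; first exact: (all_nthP 0 w_lt).
  by split=> [|k' lt_k'n]; rewrite valid_t ?eqxx //; [apply: (all_nthP 0 w_lt) | move/eqP].
have [T_proj out] := lift_state_spec T0_proj (leqnn _).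
split; last by rewrite out take_size.
by move=> i j lt_ijn; rewrite T_proj // drop_size.
Qed.

End Lifting.

Theorem mainTheorem16 (R : realType) (p : seq nat) (c : R) :
  (0 < size p)%N ->
  all (fun x => 0 < x)%N p ->
  sorted (fun x y => y <= x)%N p ->
  (0 <= c <= 1)%R ->
  let n := size p in
  let g := foldr gcdn 0%N p in
  let P := (sumn p %/ g)%N in
  let T0 : words := fun i j => Tword c p g i j in
  (forall t, (t < P)%N ->
     exists k, (k < n)%N /\ valid_label n (lift_state n T0 t).1 k /\
       (forall k', (k' < n)%N -> valid_label n (lift_state n T0 t).1 k' -> k' = k)) /\
  (forall i j, (i < j < n)%N -> (lift_state n T0 P).1 i j = [::]) /\
  (lift_state n T0 P).2 = mkseq (S c p) P.
Proof.
move=> p_nonempty p_pos _ /andP[c_ge0 c_le1] n g P T0.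
have p_bounded : all (fun v => 0 < v <= sumn p) p.
  apply/allP => v v_p; rewrite (allP p_pos) //=.
  by rewrite (perm_sumn (perm_to_rem v_p)) /= leq_addr.
have g_dvd : all (dvdn g) p := foldr_gcdn_dvd p.
have g_gt0 : 0 < g.
  have p0 := mem_nth 0 p_nonempty.
  by rewrite lt0n; apply: contraTneq (allP g_dvd _ p0) => ->; rewrite dvd0n -lt0n (allP p_pos).
have alloc_P := alloc_exact_quota c_ge0 c_le1 g_gt0 g_dvd p_bounded p_nonempty.
have T0_proj : pair_projections n T0 (mkseq (S c p) P).
  move=> i j lt_ijn; have [lt_ij lt_jn] := andP lt_ijn.
  rewrite /T0 /Tword (filter_S_pair c_ge0 P p_bounded lt_ijn) alloc_P.
  have lt_in := ltn_trans lt_ij lt_jn.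
  by rewrite !(nth_map 0) // divnDl ?(all_nthP 0 g_dvd).
have w_lt : all (fun k => k < n) (mkseq (S c p) P).
  apply/allP => _ /mapP[t _ ->].
  by case: (next_seat_spec c_ge0 p_bounded p_nonempty (alloc c p t)).
by have := lifting_recovers_word w_lt T0_proj; rewrite size_mkseq.
Qed.
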